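(* Let $X$ be a non-trivial vector space over a field $\mathbb{k}$ and let $T:X\to X$ be a linear map with no non-trivial finite dimensional invariant subspaces. Then for any finite dimensional subspace $L$ of $X$, there is $m=m(L)\in\mathbb{N}$ such that $p(T)(L)\cap L=\{0\}$ for every polynomial $p\in\mathbb{k}[t]$ with $\deg p\geq m$.
   Context: A non-trivial space/subspace means one different from $\{0\}$; a subspace $L$ is invariant for $T$ if $T(L)\subseteq L$. *)

From HB Require Import structures.
From mathcomp Require Import all_boot all_order all_algebra.
Set Implicit Arguments. Unset Strict Implicit. Unset Printing Implicit Defensive.
Import GRing.Theory.
Local Open Scope ring_scope.

Section Defs.
Variables (K : fieldType) (X : lmodType K).

Definition is_subspace (L : X -> Prop) : Prop :=
  L 0 /\ (forall (a : K) (x y : X), L x -> L y -> L (a *: x + y)).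

Definition span_seq (s : seq X) (x : X) : Prop :=
  exists c : 'I_(size s) -> K, x = \sum_(i < size s) c i *: s`_(nat_of_ord i).

Definition finite_dim (L : X -> Prop) : Prop :=
  exists s : seq X, forall x, L x <-> span_seq s x.

Definition nontrivial (L : X -> Prop) : Prop := exists x, L x /\ x <> 0.

Definition T_invariant (T : X -> X) (L : X -> Prop) : Prop :=
  forall x, L x -> L (T x).

Definition poly_app (p : {poly K}) (T : X -> X) (x : X) : X :=
  \sum_(i < size p) p`_i *: iter i T x.
End Defs.

From HB Require Import structures.
From mathcomp Require Import all_boot all_order all_algebra.
Import GRing.Theory.
Local Open Scope ring_scope.
From Stdlib Require Import Classical ClassicalEpsilon.
Set Implicit Arguments. Unset Strict Implicit. Unset Printing Implicit Defensive.

(* Let [L] be spanned by [s] and let [W_j] be the span of [s, T s, ..., T^j s].  The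
   increments [dim W_(j+1) - dim W_j] are nonincreasing, hence constant from some [J] on,
   and once they are constant, [z \in W_(j+1)] together with [T z \in W_(j+1)] forces
   [z \in W_j].  Consequently, for [j >= J], [p(T)] maps a vector lying in [W_(j+1)] but
   not in [W_j] to a vector outside [W_(j + deg p)].  As [T] has no finite dimensional
   invariant subspace, the orbit of a nonzero [x \in L] leaves [W_J] after [i <= m]
   steps, [m] being the length of the spanning family of [W_J]; so [T^i x] lies in
   [W_(j+1)] but not in [W_j] for some [J <= j < i].  If [p(T) x \in L] with
   [deg p >= m], then [p(T) (T^i x) = T^i (p(T) x)] lies in [W_i], which is contained in
   [W_(j + deg p)]: a contradiction. *)

Section Subspace.
Variables (K : fieldType) (X : lmodType K) (P : X -> Prop).
Hypothesis subP : is_subspace P.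

Lemma subspace0 : P 0.
Proof. by case: subP. Qed.

Lemma subspaceZ a x : P x -> P (a *: x).
Proof. by move=> Px; rewrite -[_ *: _]addr0; apply: subP.2 => //; apply: subspace0. Qed.

Lemma subspaceD x y : P x -> P y -> P (x + y).
Proof. by move=> Px Py; rewrite -[x]scale1r; apply: subP.2. Qed.

Lemma subspaceN x : P x -> P (- x).
Proof. by rewrite -scaleN1r; apply: subspaceZ. Qed.

Lemma subspace_sum n (F : 'I_n -> X) : (forall i, P (F i)) -> P (\sum_(i < n) F i).
Proof. by move=> PF; apply: (big_ind P) => //; [exact: subspace0 | exact: subspaceD]. Qed.

End Subspace.

Section Span.
Variables (K : fieldType) (X : lmodType K).
Implicit Types (s u v b : seq X) (x y z : X) (c : nat -> K).

Definition lin_comb s c : X := \sum_(i < size s) c i *: s`_i.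
Definition in_span s x := exists c, x = lin_comb s c.
Definition free_seq s := forall c, lin_comb s c = 0 -> forall i, (i < size s)%N -> c i = 0.
Definition is_basis (P : X -> Prop) b := free_seq b /\ forall x, P x <-> in_span b x.

Definition extend_coef n (f : 'I_n -> K) : nat -> K :=
  fun k => if insub k is Some i then f i else 0.

Lemma extend_coefE n (f : 'I_n -> K) (i : 'I_n) : extend_coef f i = f i.
Proof. by rewrite /extend_coef valK. Qed.

Lemma eq_lin_comb s c1 c2 :
  (forall i, (i < size s)%N -> c1 i = c2 i) -> lin_comb s c1 = lin_comb s c2.
Proof. by move=> E; apply: eq_bigr => i _; rewrite E. Qed.

Lemma lin_comb0 s : lin_comb s (fun _ => 0) = 0.
Proof. by rewrite /lin_comb big1 // => i _; rewrite scale0r. Qed.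

Lemma lin_combN s c : lin_comb s (fun i => - c i) = - lin_comb s c.
Proof. by rewrite /lin_comb -sumrN; apply: eq_bigr => i _; rewrite scaleNr. Qed.

Lemma lin_combP s a c1 c2 :
  a *: lin_comb s c1 + lin_comb s c2 = lin_comb s (fun i => a * c1 i + c2 i).
Proof.
rewrite /lin_comb scaler_sumr -big_split; apply: eq_bigr => i _.
by rewrite scalerDl scalerA.
Qed.

Lemma lin_comb_nil c : lin_comb [::] c = 0.
Proof. by rewrite /lin_comb big_ord0. Qed.

Lemma lin_comb_cons a s c : lin_comb (a :: s) c = c 0%N *: a + lin_comb s (fun i => c i.+1).
Proof. by rewrite /lin_comb /= big_ord_recl. Qed.

Lemma lin_comb_cat u v c :
  lin_comb (u ++ v) c = lin_comb u c + lin_comb v (fun i => c (size u + i)%N).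
Proof.
rewrite /lin_comb size_cat big_split_ord; congr (_ + _); apply: eq_bigr => i _.
  by rewrite /= nth_cat ltn_ord.
by rewrite /= nth_cat ltnNge leq_addr /= addKn.
Qed.

Lemma lin_comb_rcons s a c : lin_comb (rcons s a) c = lin_comb s c + c (size s) *: a.
Proof. by rewrite -cats1 lin_comb_cat lin_comb_cons lin_comb_nil addr0 addn0. Qed.

Lemma lin_comb_map (T : {linear X -> X}) s c : lin_comb (map T s) c = T (lin_comb s c).
Proof.
rewrite /lin_comb linear_sum size_map; apply: eq_bigr => i _.
by rewrite linearZ (nth_map 0) ?linear0 // ltn_ord.
Qed.

Lemma in_span_subspace s : is_subspace (in_span s).
Proof.
split; first by exists (fun _ => 0); rewrite lin_comb0.
by move=> a _ _ [c1 ->] [c2 ->]; rewrite lin_combP; eexists.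
Qed.

Lemma in_spanE s x : in_span s x <-> span_seq s x.
Proof.
split=> [[c ->] | [c ->]]; first by exists (fun i => c i).
by exists (extend_coef c); apply: eq_bigr => i _; rewrite extend_coefE.
Qed.

Lemma in_span_nth s x0 i : (i < size s)%N -> in_span s (nth x0 s i).
Proof.
move=> lt_i; rewrite (set_nth_default 0) //; exists (fun j => (j == i)%:R).
rewrite /lin_comb (bigD1 (Ordinal lt_i)) //= eqxx scale1r big1 ?addr0 // => j ne_ji.
by move: ne_ji; rewrite -val_eqE /= => /negPf ->; rewrite scale0r.
Qed.

Lemma in_span_nil x : in_span [::] x -> x = 0.
Proof. by move=> [c ->]; rewrite lin_comb_nil. Qed.

Lemma in_span_sub (P : X -> Prop) u x : is_subspace P ->
  (forall i, (i < size u)%N -> P u`_i) -> in_span u x -> P x.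
Proof.
move=> subP Pu [c ->]; apply: subspace_sum => // i.
exact/(subspaceZ subP)/Pu.
Qed.

Lemma in_span_trans u v x :
  (forall i, (i < size u)%N -> in_span v u`_i) -> in_span u x -> in_span v x.
Proof. by apply: in_span_sub; exact: in_span_subspace. Qed.

Lemma in_span_cat u v x :
  in_span (u ++ v) x <-> exists x1 x2, [/\ in_span u x1, in_span v x2 & x = x1 + x2].
Proof.
split=> [[c ->] | [x1 [x2 [ux1 vx2 ->]]]].
  by rewrite lin_comb_cat; do 2 eexists; split; eexists.
apply: subspaceD; first exact: in_span_subspace.
  apply: in_span_trans ux1 => i lt_i.
  have -> : u`_i = (u ++ v)`_i by rewrite nth_cat lt_i.
  by apply: in_span_nth; rewrite size_cat ltn_addr.
apply: in_span_trans vx2 => i lt_i.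
have -> : v`_i = (u ++ v)`_(size u + i) by rewrite nth_cat ltnNge leq_addr /= addKn.
by apply: in_span_nth; rewrite size_cat ltn_add2l.
Qed.

Lemma in_span_map (T : {linear X -> X}) u x :
  in_span (map T u) x <-> exists2 y, in_span u y & x = T y.
Proof.
split=> [[c ->] | [y [c ->] ->]]; last by exists c; rewrite lin_comb_map.
by exists (lin_comb u c); [eexists | rewrite lin_comb_map].
Qed.

End Span.

Section Free.
Variables (K : fieldType) (X : lmodType K).
Implicit Types (s u v b e : seq X) (x y z : X) (c : nat -> K).

Lemma in_span_dependent b x a c :
  a != 0 -> a *: x + lin_comb b c = 0 -> in_span b x.
Proof.
move=> a0 dep; have -> : x = - a^-1 *: lin_comb b c.
  apply: (scalerI a0); rewrite scalerA mulrN mulfV // scaleN1r.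
  by apply/eqP; rewrite -addr_eq0 dep.
exists (fun i => - a^-1 * c i).
by rewrite /lin_comb scaler_sumr; apply: eq_bigr => i _; rewrite scalerA.
Qed.

Lemma free_nil : free_seq ([::] : seq X).
Proof. by []. Qed.

Lemma free_cons b x : free_seq b -> ~ in_span b x -> free_seq (x :: b).
Proof.
move=> fb nbx c; rewrite lin_comb_cons => dep.
have c0 : c 0%N = 0 by apply: contra_not_eq nbx => c0; exact: in_span_dependent dep.
rewrite c0 scale0r add0r in dep.
by case=> [|i] //= lt_i; apply: fb dep _ lt_i.
Qed.

Lemma free_rcons b x : free_seq b -> ~ in_span b x -> free_seq (rcons b x).
Proof.
move=> fb nbx c; rewrite lin_comb_rcons addrC => dep.
have c0 : c (size b) = 0.
  by apply: contra_not_eq nbx => c0; exact: in_span_dependent dep.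
rewrite c0 scale0r add0r in dep.
move=> i; rewrite size_rcons ltnS leq_eqVlt => /orP[/eqP -> // |]; exact: fb.
Qed.

Lemma free_catE u v : free_seq (u ++ v) <->
  forall c1 c2, lin_comb u c1 + lin_comb v c2 = 0 ->
    (forall i, (i < size u)%N -> c1 i = 0) /\ (forall i, (i < size v)%N -> c2 i = 0).
Proof.
split=> [f c1 c2 dep | f c].
  pose c i := if (i < size u)%N then c1 i else c2 (i - size u)%N.
  have {}dep : lin_comb (u ++ v) c = 0.
    rewrite lin_comb_cat -dep; congr (_ + _); apply: eq_lin_comb => i lt_i.
      by rewrite /c lt_i.
    by rewrite /c ltnNge leq_addr /= addKn.
  split=> i lt_i.
    by have := f c dep i; rewrite /c lt_i size_cat ltn_addr //; apply.
  have := f c dep (size u + i)%N; rewrite size_cat ltn_add2l => /(_ lt_i).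
  by rewrite /c ltnNge leq_addr /= addKn.
rewrite lin_comb_cat => /f [c1_0 c2_0] i; rewrite size_cat => lt_i.
have [lt_iu | le_ui] := ltnP i (size u); first exact: c1_0.
by have := c2_0 (i - size u)%N; rewrite subnKC // ltn_subLR //; apply.
Qed.

(* Steinitz: the coordinates of [u] in [v] form a [size u x size v] matrix, which
   has a nonzero left kernel as soon as [size v < size u]. *)
Lemma free_in_span_size u v : free_seq u ->
  (forall i, (i < size u)%N -> in_span v u`_i) -> (size u <= size v)%N.
Proof.
move=> fu uv; rewrite leqNgt; apply/negP => lt_vu.
have [C uC] :
    exists C : 'I_(size u) -> nat -> K, forall i : 'I_(size u), u`_i = lin_comb v (C i).
  by apply: (fin_all_exists (fun i : 'I_(size u) => uv i (ltn_ord i))).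
pose A : 'M[K]_(size u, size v) := \matrix_(i, j) C i j.
have /rowV0Pn [r /sub_kermxP rA r0] : kermx A != 0.
  rewrite kermx_eq0; apply: contraL lt_vu => /eqP <-.
  by rewrite -leqNgt rank_leq_col.
have [k rk0] := rV0Pn _ r0.
suff /fu /(_ k (ltn_ord k)) : lin_comb u (extend_coef (r 0)) = 0.
  by rewrite extend_coefE => rk; rewrite rk eqxx in rk0.
rewrite /lin_comb.
under eq_bigr => i _ do rewrite extend_coefE uC /lin_comb scaler_sumr.
rewrite exchange_big /=; apply: big1 => j _.
under eq_bigr => i _ do rewrite scalerA.
rewrite -scaler_suml; suff -> : \sum_(i < size u) r 0 i * C i j = 0 by rewrite scale0r.
transitivity ((r *m A) 0 j); last by rewrite rA mxE.
by rewrite mxE; apply: eq_bigr => i _; rewrite mxE.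
Qed.

Lemma extend_basis (P : X -> Prop) v b : is_subspace P ->
  (forall x, P x -> in_span v x) -> free_seq b -> (forall i, (i < size b)%N -> P b`_i) ->
  exists e, is_basis P (e ++ b).
Proof.
move=> subP Pv; have [n] := ubnP (size v - size b); elim: n => // n IH in b *.
rewrite ltnS => le_n fb Pb.
have [[x Px nbx] | spanb] := classic (exists2 x, P x & ~ in_span b x); last first.
  exists [::]; split=> // x; split=> [Px | ]; last exact: in_span_sub.
  by apply: NNPP => nbx; apply: spanb; exists x.
have fxb : free_seq (x :: b) := free_cons fb nbx.
have Pxb : forall i, (i < size (x :: b))%N -> P (x :: b)`_i by case=> [|i] //= /Pb.
have lt_bv : (size (x :: b) <= size v)%N.
  by apply: free_in_span_size fxb _ => i /Pxb /Pv.
have [|e be] := IH (x :: b) _ fxb Pxb; first by rewrite /= subnS prednK ?subn_gt0.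
by exists (rcons e x); rewrite cat_rcons.
Qed.

Lemma basis_size (P : X -> Prop) b1 b2 : is_basis P b1 -> is_basis P b2 -> size b1 = size b2.
Proof.
move=> [f1 P1] [f2 P2]; apply/eqP; rewrite eqn_leq.
by rewrite (free_in_span_size f1) ?(free_in_span_size f2) // => i /(in_span_nth 0);
  [move/P2/P1 | move/P1/P2].
Qed.

End Free.

Lemma nonincreasing_stationary (f : nat -> nat) :
  (forall j, (f j.+1 <= f j)%N) -> exists J, forall j, (J <= j)%N -> f j = f J.
Proof.
move=> f_dec; have [n] := ubnP (f 0%N); elim: n => // n IH in f f_dec *.
rewrite ltnS => le_n.
have [[j0 lt_j0] | f_const] := classic (exists j0, (f j0 < f 0)%N); last first.
  exists 0%N => j _; apply/eqP; rewrite eqn_leq; apply/andP; split.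
    exact: (homo_leq (r := fun a b => (b <= a)%N) leqnn
              (fun _ _ _ le1 le2 => leq_trans le2 le1) f_dec (leq0n j)).
  by rewrite leqNgt; apply/negP => lt_j; apply: f_const; exists j.
have shift_dec j : (f (j0 + j.+1) <= f (j0 + j))%N by rewrite addnS; apply: f_dec.
have shift_lt : (f (j0 + 0) < n)%N by rewrite addn0 (leq_trans lt_j0 le_n).
have [J stable] := IH (fun j => f (j0 + j)%N) shift_dec shift_lt.
exists (j0 + J)%N => j le_j; have le_j0 : (j0 <= j)%N := leq_trans (leq_addr _ _) le_j.
by have := stable (j - j0)%N; rewrite subnKC //; apply; rewrite leq_subRL.
Qed.

Section Iterates.
Variables (K : fieldType) (X : lmodType K) (T : {linear X -> X}).
Implicit Types (x : X) (p : {poly K}).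

Lemma poly_app0 p : poly_app p T 0 = 0.
Proof.
rewrite /poly_app big1 // => i _; suff -> : iter i T 0 = 0 by rewrite scaler0.
by elim: (nat_of_ord i) => [|k IH] //=; rewrite IH linear0.
Qed.

Lemma poly_appT p x : T (poly_app p T x) = poly_app p T (T x).
Proof.
rewrite /poly_app linear_sum; apply: eq_bigr => i _.
by rewrite linearZ /= -iterS iterSr.
Qed.

Lemma poly_app_iter p i x : iter i T (poly_app p T x) = poly_app p T (iter i T x).
Proof. by elim: i => [|i IH] //=; rewrite IH poly_appT. Qed.

Lemma free_traject x N :
  (forall k, (k < N)%N -> ~ in_span (traject T x k) (iter k T x)) -> free_seq (traject T x N).
Proof.
elim: N => [_ c //|N IH] indep; rewrite trajectSr.
by apply: free_rcons; [apply: IH => k /ltnW; exact: indep | exact: indep].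
Qed.

Lemma traject_span_invariant x k :
  in_span (traject T x k) (iter k T x) -> T_invariant T (in_span (traject T x k)).
Proof.
move=> Tk_x y [c ->]; rewrite -lin_comb_map.
apply: in_span_trans (ex_intro _ c erefl) => i; rewrite size_map size_traject => lt_ik.
rewrite (nth_map x) ?size_traject // nth_traject // -iterS.
case: (ltnP i.+1 k) => [lt_i1k | le_ki1]; last first.
  by have -> : i.+1 = k by apply/anti_leq; rewrite lt_ik le_ki1.
by rewrite -(nth_traject T lt_i1k); apply: in_span_nth; rewrite size_traject.
Qed.

(* If the orbit of [x] stayed in [span w] for [size w + 1] steps, it would be linearly
   dependent, and its first dependency spans a finite dimensional invariant subspace. *)
Lemma orbit_escapes_span w x :
  (forall M : X -> Prop, is_subspace M -> finite_dim M -> T_invariant T M -> ~ nontrivial M) ->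
  x <> 0 -> exists2 i, (i <= size w)%N & ~ in_span w (iter i T x).
Proof.
move=> no_inv x0; apply: NNPP => orbit_in_w.
have [k _ Tk_x] :
    exists2 k, (k < (size w).+1)%N & in_span (traject T x k) (iter k T x).
  apply: NNPP => indep.
  suff : (size (traject T x (size w).+1) <= size w)%N by rewrite size_traject ltnn.
  apply: free_in_span_size => [|i].
    by apply: free_traject => k lt_k Tk_x; apply: indep; exists k.
  rewrite size_traject => lt_iw; rewrite (set_nth_default x) ?size_traject // nth_traject //.
  by apply: NNPP => Ti_x; apply: orbit_in_w; exists i.
apply: (no_inv (in_span (traject T x k))).
- exact: in_span_subspace.
- by exists (traject T x k) => y; exact: in_spanE.
- exact: traject_span_invariant.
case: k Tk_x => [/in_span_nil // | k _].
by exists x; split=> //; exact: (@in_span_nth _ _ (traject T x k.+1) x 0).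
Qed.

End Iterates.

Section Krylov.
Variables (K : fieldType) (X : lmodType K) (T : {linear X -> X}) (s : seq X).
Implicit Types (b e : seq X) (x y z : X).

(* [krylov j] is [W_j], the span of [s, T s, ..., T^j s]. *)
Fixpoint krylov_seq j : seq X := if j is j'.+1 then s ++ map T (krylov_seq j') else s.
Definition krylov j := in_span (krylov_seq j).

Lemma krylov_subspace j : is_subspace (krylov j).
Proof. exact: in_span_subspace. Qed.

Lemma krylovSE j z :
  krylov j.+1 z <-> exists x y, [/\ in_span s x, krylov j y & z = x + T y].
Proof.
split=> [/in_span_cat [x [_ [sx /in_span_map [y jy ->] ->]]] | [x [y [sx jy ->]]]].
  by exists x, y.
by apply/in_span_cat; exists x, (T y); split=> //; apply/in_span_map; exists y.
Qed.

Lemma span_sub_krylov j x : in_span s x -> krylov j x.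
Proof.
case: j => [//|j] sx; apply/krylovSE; exists x, 0; split=> //.
  exact: subspace0 (krylov_subspace j).
by rewrite linear0 addr0.
Qed.

Lemma krylovT j x : krylov j x -> krylov j.+1 (T x).
Proof.
move=> jx; apply/krylovSE; exists 0, x; rewrite add0r; split=> //.
exact: subspace0 (in_span_subspace s).
Qed.

Lemma krylovS j x : krylov j x -> krylov j.+1 x.
Proof.
elim: j x => [|j IH] x; first exact: span_sub_krylov.
by move=> /krylovSE [x0 [y [sx0 jy ->]]]; apply/krylovSE; exists x0, y; split=> //; apply: IH.
Qed.

Lemma krylov_mono j k x : (j <= k)%N -> krylov j x -> krylov k x.
Proof. by move=> /subnK <-; elim: (k - j)%N => [//|l IH] /IH; apply: krylovS. Qed.

Lemma krylov_iter i x : in_span s x -> krylov i (iter i T x).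
Proof. by move=> sx; elim: i => [|i IH] //=; apply: krylovT. Qed.

Lemma krylov_has_basis j : exists b, is_basis (krylov j) b.
Proof.
have [//|b] := extend_basis (krylov_subspace j) (fun x jx => jx) (@free_nil _ X).
by rewrite cats0; exists b.
Qed.

Definition krylov_pre j z := krylov j.+1 z /\ krylov j.+1 (T z).

Lemma krylov_pre_subspace j : is_subspace (krylov_pre j).
Proof.
have [W0 WD] := krylov_subspace j.+1.
split; first by rewrite /krylov_pre linear0.
by move=> a x y [jx jTx] [jy jTy]; split; rewrite ?linearP; apply: WD.
Qed.

Lemma krylov_sub_pre j x : krylov j x -> krylov_pre j x.
Proof. by move=> jx; split; [apply: krylovS | apply: krylovT]. Qed.

Section Step.
Variables (j : nat) (e b b1 : seq X).
Hypotheses (pre_b : is_basis (krylov_pre j) b) (Sj_eb : is_basis (krylov j.+1) (e ++ b))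
  (Sj_b1 : is_basis (krylov j.+1) b1).

Lemma krylovSS_free : free_seq (map T e ++ b1).
Proof.
have [f_eb span_eb] := Sj_eb; have [f_b1 span_b1] := Sj_b1.
apply/free_catE => c1 c2; rewrite lin_comb_map => dep.
have pre_e : krylov_pre j (lin_comb e c1).
  split; first by apply/span_eb/in_span_cat; exists (lin_comb e c1), 0; split;
    [eexists | exact: subspace0 (in_span_subspace b) | rewrite addr0].
  have -> : T (lin_comb e c1) = - lin_comb b1 c2 by apply/eqP; rewrite -addr_eq0 dep.
  by apply/span_b1; rewrite -lin_combN; eexists.
have [c3 e_c3] := (pre_b.2 _).1 pre_e.
have [|e0 _] := (free_catE e b).1 f_eb c1 (fun i => - c3 i).
  by rewrite lin_combN -e_c3 subrr.
rewrite (eq_lin_comb (c2 := fun _ => 0) e0) lin_comb0 linear0 add0r in dep.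
by split=> [i|]; [rewrite size_map; exact: e0 | exact: f_b1 dep].
Qed.

Lemma krylovSS_span x : krylov j.+2 x <-> in_span (map T e ++ b1) x.
Proof.
have [_ span_eb] := Sj_eb; have [_ span_b1] := Sj_b1.
split=> [/krylovSE [x0 [y [sx0 /span_eb /in_span_cat [y1 [y2 [[c ->] /pre_b.2 [_ jTy2] ->]]] ->]]]
        | /in_span_cat [z1 [z2 [/in_span_map [y ey ->] /span_b1 jz2 ->]]]].
  apply/in_span_cat; exists (T (lin_comb e c)), (x0 + T y2); split.
  - by apply/in_span_map; exists (lin_comb e c) => //; eexists.
  - apply/span_b1.
    exact: (subspaceD (krylov_subspace j.+1)) (span_sub_krylov j.+1 sx0) jTy2.
  - by rewrite raddfD addrCA.
apply: (subspaceD (krylov_subspace j.+2)) (krylovS jz2).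
apply/krylovT/span_eb/in_span_cat.
by exists y, 0; split; [| exact: subspace0 (in_span_subspace b) | rewrite addr0].
Qed.

End Step.

(* With [b0, e1 ++ b0, e2 ++ e1 ++ b0] bases of [krylov j, krylov_pre j, krylov j.+1],
   the increments are [size e2 + size e1] from [j] to [j.+1] and [size e2] from [j.+1]
   to [j.+2]; they are equal exactly when [krylov_pre j = krylov j]. *)
Lemma krylov_increment j b0 b1 b2 :
  is_basis (krylov j) b0 -> is_basis (krylov j.+1) b1 -> is_basis (krylov j.+2) b2 ->
  (size b2 - size b1 <= size b1 - size b0)%N /\
  ((size b2 - size b1)%N = (size b1 - size b0)%N ->
     forall z, krylov_pre j z -> krylov j z).
Proof.
move=> [f_b0 span_b0] Sj_b1 SSj_b2.
have [e1 pre_e1b0] : exists e1, is_basis (krylov_pre j) (e1 ++ b0).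
  have pre_Sj x : krylov_pre j x -> krylov j.+1 x by case.
  apply: (extend_basis (krylov_pre_subspace j) pre_Sj f_b0) => i lt_i.
  exact/krylov_sub_pre/span_b0/in_span_nth.
have [e2 Sj_e2] : exists e2, is_basis (krylov j.+1) (e2 ++ e1 ++ b0).
  apply: (extend_basis (krylov_subspace j.+1) (fun x jx => jx) pre_e1b0.1) => i lt_i.
  exact: ((pre_e1b0.2 _).2 (in_span_nth 0 lt_i)).1.
have SSj_e2b1 : is_basis (krylov j.+2) (map T e2 ++ b1).
  by split; [apply: krylovSS_free pre_e1b0 _ _ | apply: krylovSS_span pre_e1b0 _ _].
have size_b1 : size b1 = (size e2 + (size e1 + size b0))%N.
  by rewrite (basis_size Sj_b1 Sj_e2) !size_cat.
have size_b2 : size b2 = (size e2 + size b1)%N.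
  by rewrite (basis_size SSj_b2 SSj_e2b1) size_cat size_map.
rewrite size_b2 addnK size_b1 addnA addnK; split; first exact: leq_addr.
move=> /eqP; rewrite -{1}[size e2]addn0 eqn_add2l eq_sym size_eq0 => /eqP e1_nil z pre_z.
by apply/span_b0; move: pre_z => /(pre_e1b0.2 z); rewrite e1_nil.
Qed.

End Krylov.

Lemma krylov_stationary (K : fieldType) (X : lmodType K) (T : {linear X -> X}) (s : seq X) :
  exists J, forall j, (J <= j)%N -> forall z, krylov_pre T s j z -> krylov T s j z.
Proof.
have [B B_basis] := choice _ (krylov_has_basis T s).
pose d j := (size (B j.+1) - size (B j))%N.
have [J d_const] := @nonincreasing_stationary d
  (fun j => (krylov_increment (B_basis j) (B_basis j.+1) (B_basis j.+2)).1).
exists J => j le_Jj; apply: (krylov_increment (B_basis j) (B_basis j.+1) (B_basis j.+2)).2.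
by rewrite -/(d j.+1) -/(d j) !d_const // (leqW le_Jj).
Qed.

Lemma nat_pred_transition (Q : nat -> Prop) J a : ~ Q J -> Q a -> (J <= a)%N ->
  exists j, [/\ (J <= j)%N, (j < a)%N, Q j.+1 & ~ Q j].
Proof.
elim: a => [|a IH] nQJ Qa; first by rewrite leqn0 => /eqP J0; rewrite J0 in nQJ.
rewrite leq_eqVlt ltnS => /orP [/eqP J_a | le_Ja]; first by rewrite J_a in nQJ.
have [Q_a | nQ_a] := classic (Q a); last by exists a.
by have [j [? ? ? ?]] := IH nQJ Q_a le_Ja; exists j; split=> //; apply: ltnW.
Qed.

Section Stationary.
Variables (K : fieldType) (X : lmodType K) (T : {linear X -> X}) (s : seq X) (J : nat).
Hypothesis stable : forall j, (J <= j)%N -> forall z, krylov_pre T s j z -> krylov T s j z.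
Local Notation krylov := (krylov T s).

Lemma krylov_iter_exact j z : (J <= j)%N -> krylov j.+1 z -> ~ krylov j z ->
  forall l, krylov (j.+1 + l) (iter l T z) /\ ~ krylov (j + l) (iter l T z).
Proof.
move=> le_Jj jz njz; elim=> [|l [IH1 IH2]]; first by rewrite !addn0.
rewrite !addnS /=; split; first exact: krylovT.
move=> jTl; apply: IH2; apply: stable; first exact: leq_trans le_Jj (leq_addr _ _).
by split; rewrite -?addSn.
Qed.

Lemma poly_app_krylov_exact (p : {poly K}) j z :
  (J <= j)%N -> krylov j.+1 z -> ~ krylov j z -> p != 0 ->
  ~ krylov (j + (size p).-1) (poly_app p T z).
Proof.
move=> le_Jj jz njz p0; set k := (size p).-1.
have size_p : size p = k.+1 by rewrite prednK // size_poly_gt0.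
have pk0 : p`_k != 0 by rewrite -lead_coefE lead_coef_eq0.
have exact_iter := krylov_iter_exact le_Jj jz njz.
rewrite /poly_app size_p big_ord_recr /= => j_p.
have j_low : krylov (j + k) (\sum_(i < k) p`_i *: iter i T z).
  apply: (subspace_sum (krylov_subspace T s _)) => i.
  apply: (subspaceZ (krylov_subspace T s _)).
  by apply: krylov_mono (exact_iter i).1; rewrite addSn -addnS leq_add2l.
have j_top : krylov (j + k) (p`_k *: iter k T z).
  rewrite -(addKr (\sum_(i < k) p`_i *: iter i T z) (p`_k *: _)).
  exact: (subspaceD (krylov_subspace T s _)) (subspaceN (krylov_subspace T s _) j_low) j_p.
apply: (exact_iter k).2.
by rewrite -(scalerK pk0 (iter k T z)); apply: (subspaceZ (krylov_subspace T s _)).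
Qed.

End Stationary.

Unset Implicit Arguments.

Theorem lemma1p5 (K : fieldType) (X : lmodType K) (T : {linear X -> X}) :
  (exists x : X, x <> 0) ->
  (forall M : X -> Prop, is_subspace M -> finite_dim M -> T_invariant (fun v : X => T v) M ->
     ~ nontrivial M) ->
  forall L : X -> Prop, is_subspace L -> finite_dim L ->
  exists m : nat, forall p : {poly K}, (m <= (size p).-1)%N -> p != 0 ->
    forall y : X, L y -> (exists x, L x /\ y = poly_app p (fun v : X => T v) x) -> y = 0.
Proof.
move=> _ no_inv L _ [s Ls].
have Lspan x : L x -> in_span s x by move/Ls/in_spanE.
have [J stable] := krylov_stationary T s.
exists (size (krylov_seq T s J)) => p le_mp p0 y Ly [x [Lx y_def]].
apply: NNPP => y0; have x0 : x <> 0 by move=> x0; apply: y0; rewrite y_def x0 poly_app0.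
have [i le_im Ti_x] := orbit_escapes_span (krylov_seq T s J) no_inv x0.
have i_Ti_x := krylov_iter T i (Lspan x Lx).
have le_Ji : (J <= i)%N.
  by rewrite leqNgt; apply/negP => /ltnW le_iJ; exact/Ti_x/(krylov_mono le_iJ i_Ti_x).
have [j [le_Jj _ jSx njx]] :=
  nat_pred_transition (Q := fun j => krylov T s j (iter i T x)) Ti_x i_Ti_x le_Ji.
apply: (poly_app_krylov_exact stable le_Jj jSx njx p0).
rewrite -poly_app_iter -y_def; apply: (krylov_mono _ (krylov_iter T i (Lspan y Ly))).
exact: leq_trans le_im (leq_trans le_mp (leq_addl _ _)).
Qed.
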